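(* Assume (A1) with constant $R$ and (A3) with constant $C_h$. Then for every $x\in\mathcal{C}$, if $\beta>\beta_1(x)$, the point $x-t\nabla g(x)$ belongs to $\mathcal{C}$ for all $t\in[0,t_1(x)]$, where $$t_1(x)=\min\!\left(\sqrt{\frac{R}{2C_h}}\frac{1}{\|\nabla g(x)\|},\ \frac{(2\beta\sigma_{\min}(\mathrm{D}h(x))^2-\sigma_1(\mathrm{D}h(x))C_\lambda(x))R}{2C_h\|\nabla g(x)\|^2},\ \frac{1}{2\beta\|\mathrm{D}h(x)\|_{\mathrm{op}}^2}\right).$$
   Context: Let $\mathcal{E}$ be a Euclidean space with inner product $\langle\cdot,\cdot\rangle$ and norm $\|\cdot\|$ (2-norm on $\mathbb{R}^m$), and $f\colon\mathcal{E}\to\mathbb{R}$, $h\colon\mathcal{E}\to\mathbb{R}^m$ be $C^\infty$. $\mathrm{D}h(x)$ is the differential, $\mathrm{D}h(x)^*$ its adjoint, $\sigma_1$ and $\sigma_{\min}=\sigma_m$ the largest and $m$-th singular values. $\mathcal{D}=\{x:\operatorname{rank}\mathrm{D}h(x)=m\}$; for $x\in\mathcal{D}$, $\lambda(x)=(\mathrm{D}h(x)^* )^\dagger[\nabla f(x)]$ (Moore–Penrose), smooth on $\mathcal{D}$. For $\beta\ge0$, Fletcher's augmented Lagrangian is $g(x)=f(x)-\langle h(x),\lambda(x)\rangle+\beta\|h(x)\|^2$. (A1): there are $R,\underline{\sigma}>0$ with $\sigma_{\min}(\mathrm{D}h(x))\ge\underline{\sigma}$ for all $x\in\mathcal{C}=\{x:\|h(x)\|\le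 R\}$. (A3): there is $C_h>0$ such that for all $x\in\mathcal{C}$, $v\in\mathcal{E}$: $h(x+v)=h(x)+\mathrm{D}h(x)[v]+E(x,v)$ with $\|E(x,v)\|\le C_h\|v\|^2$. For $x\in\mathcal{C}$: $C_\lambda(x)=\|\mathrm{D}\lambda(x)\|_{\mathrm{op}}$ and $\beta_1(x)=\sigma_1(\mathrm{D}h(x))C_\lambda(x)/(2\sigma_{\min}(\mathrm{D}h(x))^2)$. *)

From HB Require Import structures.
From mathcomp Require Import all_boot all_order all_algebra.
From mathcomp Require Import all_classical all_reals all_analysis.
Set Implicit Arguments. Unset Strict Implicit. Unset Printing Implicit Defensive.
Import Order.TTheory GRing.Theory Num.Theory.
Import numFieldNormedType.Exports.
Local Open Scope classical_set_scope.
Local Open Scope ring_scope.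

Section Defs.
Variable R : realType.

(* The Euclidean space E is modelled as R^n = 'rV[R]_n (row vectors), with the
   standard inner product and the 2-norm (NOT mathcomp's sup norm). *)
Definition dot (n : nat) (u v : 'rV[R]_n) : R := (u *m v^T) 0 0.
Definition norm2 (n : nat) (u : 'rV[R]_n) : R := Num.sqrt (dot u u).

(* A linear map R^n -> R^m is represented by a matrix M : 'M_(n,m) acting on
   row vectors: v |-> v *m M.  Its adjoint is u |-> u *m M^T. *)

(* operator norm w.r.t. 2-norms; this is also the largest singular value sigma_1 *)
Definition opnorm (n m : nat) (M : 'M[R]_(n, m)) : R :=
  sup [set r | exists v : 'rV[R]_n, norm2 v <= 1 /\ r = norm2 (v *m M)].
Definition sigma1 (n m : nat) (M : 'M[R]_(n, m)) : R := opnorm M.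

(* m-th singular value of the linear map v |-> v *m M : R^n -> R^m, which equals
   the smallest singular value of its adjoint R^m -> R^n:
   inf over unit u in R^m of ||M^* u||. *)
Definition sigma_min (n m : nat) (M : 'M[R]_(n, m)) : R :=
  inf [set r | exists u : 'rV[R]_m, norm2 u = 1 /\ r = norm2 (u *m M^T)].

Fixpoint smooth_k (k : nat) (U V : normedModType R) (F : U -> V) : Prop :=
  match k with
  | 0 => continuous F
  | k'.+1 => (forall x, differentiable F x) /\
             (forall v : U, smooth_k k' (fun x => 'd F x v))
  end.
Definition smooth (U V : normedModType R) (F : U -> V) : Prop :=
  forall k, smooth_k k F.

(* Differential of h : R^n -> R^m at x, as an n x m matrix (Dh(x)[v] = v *m Dh x) *)
Definition Dmx (n m : nat) (F : 'rV[R]_n -> 'rV[R]_m) (x : 'rV[R]_n) : 'M[R]_(n, m) :=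
  lin1_mx ('d F x).

Definition grad (n : nat) (F : 'rV[R]_n -> R) (x : 'rV[R]_n) : 'rV[R]_n :=
  \row_i ('d F x (delta_mx 0 i)).

Definition penrose (p q : nat) (A : 'M[R]_(p, q)) (X : 'M[R]_(q, p)) : Prop :=
  [/\ A *m X *m A = A, X *m A *m X = X,
      (A *m X)^T = A *m X & (X *m A)^T = X *m A].
Definition mp_pinv (p q : nat) (A : 'M[R]_(p, q)) : 'M[R]_(q, p) :=
  xget 0 [set X | penrose A X].

(* lambda(x) = (Dh(x)^* )^dagger [grad f(x)].  Dh(x)^* : R^m -> R^n is the
   matrix (Dmx h x)^T acting on rows; its pseudo-inverse acts by the matrix
   mp_pinv ((Dmx h x)^T). *)
Definition lam (n m : nat) (f : 'rV[R]_n -> R) (h : 'rV[R]_n -> 'rV[R]_m)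
  (x : 'rV[R]_n) : 'rV[R]_m :=
  grad f x *m mp_pinv ((Dmx h x)^T).

Definition fletcher (n m : nat) (f : 'rV[R]_n -> R) (h : 'rV[R]_n -> 'rV[R]_m)
  (beta : R) (x : 'rV[R]_n) : R :=
  f x - dot (h x) (lam f h x) + beta * norm2 (h x) ^+ 2.

Definition Cset (n m : nat) (h : 'rV[R]_n -> 'rV[R]_m) (Rc : R) : set 'rV[R]_n :=
  [set x | norm2 (h x) <= Rc].

Definition C_lambda (n m : nat) (f : 'rV[R]_n -> R) (h : 'rV[R]_n -> 'rV[R]_m)
  (x : 'rV[R]_n) : R := opnorm (Dmx (lam f h) x).

Definition beta1 (n m : nat) (f : 'rV[R]_n -> R) (h : 'rV[R]_n -> 'rV[R]_m)
  (x : 'rV[R]_n) : R :=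
  sigma1 (Dmx h x) * C_lambda f h x / (2 * sigma_min (Dmx h x) ^+ 2).

(* a / b with the convention a / 0 = +oo (used with a > 0) *)
Definition edivpos (a b : R) : \bar R := if b == 0 then +oo%E else (a / b)%:E.

(* t_1(x), valued in the extended reals (the first two terms are +oo when
   grad g(x) = 0) *)
Definition t1 (n m : nat) (f : 'rV[R]_n -> R) (h : 'rV[R]_n -> 'rV[R]_m)
  (beta Rc Ch : R) (x : 'rV[R]_n) : \bar R :=
  let G := norm2 (grad (fletcher f h beta) x) in
  let J := Dmx h x in
  Order.min (Order.min
    (edivpos (Num.sqrt (Rc / (2 * Ch))) G)
    (edivpos ((2 * beta * sigma_min J ^+ 2 - sigma1 J * C_lambda f h x) * Rc)
             (2 * Ch * G ^+ 2)))
    (edivpos 1 (2 * beta * opnorm J ^+ 2)).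

End Defs.

(* Write J = Dh(x), G = grad g(x) and let the margin
   alpha = 2 beta sigma_min(J)^2 - sigma_1(J) C_lambda(x),
   which is positive exactly when beta > beta_1(x).  Since lambda(x) is the least-squares
   multiplier, grad f(x) - J^T lambda(x) lies in the kernel of J, so
   J G = 2 beta J J^T h(x) - J Dlambda(x)^T h(x) and, by (A3),
     h(x - t G) = (I - 2 beta t J J^T) h(x) + t J Dlambda(x)^T h(x) + E,
     ||E|| <= C_h t^2 ||G||^2.
   For 2 beta t ||J||^2 <= 1 the operator I - 2 beta t J J^T is positive semidefinite with
   norm at most 1 - 2 beta t sigma_min(J)^2, hence
     ||h(x - t G)|| <= (1 - t alpha) ||h(x)|| + C_h t^2 ||G||^2.
   The two other bounds in t_1(x) make the error at most R/2 and at most t alpha R/2,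
   which keeps the right-hand side below R whether ||h(x)|| <= R/2 or not. *)

From HB Require Import structures.
From mathcomp Require Import all_boot all_order all_algebra.
From mathcomp Require Import all_classical all_reals all_analysis.
From mathcomp Require Import ring lra.
Import Order.TTheory GRing.Theory Num.Theory.
Import numFieldNormedType.Exports.
Local Open Scope classical_set_scope.
Local Open Scope ring_scope.
Set Implicit Arguments. Unset Strict Implicit.

Section RealInequalities.
Variable R : realFieldType.
Implicit Types a b c : R.

Lemma le_of_sqr_le a b : 0 <= b -> a ^+ 2 <= b ^+ 2 -> a <= b.
Proof. by move=> b0 ab; nra. Qed.

Lemma quadratic_ge0_discriminant a b c : 0 <= c ->
  (forall s, 0 <= a + 2 * s * b + s ^+ 2 * c) -> b ^+ 2 <= a * c.
Proof.
move=> c0 q_ge0; have [c_eq0|c_neq0] := eqVneq c 0.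
  have [->|b_neq0] := eqVneq b 0; first by rewrite c_eq0 expr0n mulr0.
  have := q_ge0 (- (a + 1) / (2 * b)); rewrite c_eq0.
  have -> : a + 2 * (- (a + 1) / (2 * b)) * b + (- (a + 1) / (2 * b)) ^+ 2 * 0
    = -1 by field; rewrite ?b_neq0 ?pnatr_eq0 ?andbT.
  by rewrite ler0N1.
have c_gt0 : 0 < c by rewrite lt_def c_neq0.
have := q_ge0 (- b / c).
have -> : a + 2 * (- b / c) * b + (- b / c) ^+ 2 * c = a - b ^+ 2 / c by field.
by rewrite subr_ge0 ler_pdivrMr.
Qed.

End RealInequalities.

Section EuclideanRows.
Variables (R : realType) (n : nat).
Implicit Types (a : R) (u v w : 'rV[R]_n).

Lemma dotE u v : dot u v = \sum_i u 0 i * v 0 i.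
Proof. by rewrite /dot mxE; apply: eq_bigr => i _; rewrite mxE. Qed.

Lemma dotC u v : dot u v = dot v u.
Proof. by rewrite !dotE; apply: eq_bigr => i _; rewrite mulrC. Qed.

Lemma dotDl u v w : dot (u + v) w = dot u w + dot v w.
Proof. by rewrite !dotE -big_split; apply: eq_bigr => i _; rewrite mxE mulrDl. Qed.

Lemma dotZl a u v : dot (a *: u) v = a * dot u v.
Proof. by rewrite !dotE mulr_sumr; apply: eq_bigr => i _; rewrite mxE mulrA. Qed.

Lemma dotNl u v : dot (- u) v = - dot u v.
Proof. by rewrite -scaleN1r dotZl mulN1r. Qed.

Lemma dotDr u v w : dot w (u + v) = dot w u + dot w v.
Proof. by rewrite dotC dotDl !(dotC w). Qed.

Lemma dotZr a u v : dot v (a *: u) = a * dot v u.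
Proof. by rewrite dotC dotZl dotC. Qed.

Lemma dotNr u v : dot v (- u) = - dot v u.
Proof. by rewrite dotC dotNl dotC. Qed.

Lemma dot0l v : dot 0 v = 0.
Proof. by rewrite -(scale0r 0) dotZl mul0r. Qed.

Lemma dot_ge0 u : 0 <= dot u u.
Proof. by rewrite dotE sumr_ge0 // => i _; rewrite -expr2 sqr_ge0. Qed.

Lemma dot_eq0 u : (dot u u == 0) = (u == 0).
Proof.
apply/idP/eqP => [|->]; last by rewrite dot0l.
rewrite dotE psumr_eq0 => [/allP u0|i _]; last by rewrite -expr2 sqr_ge0.
apply/rowP => i; rewrite mxE; have := u0 i (mem_index_enum i).
by rewrite /= -expr2 sqrf_eq0 => /eqP.
Qed.

Lemma norm2_ge0 u : 0 <= norm2 u.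
Proof. exact: sqrtr_ge0. Qed.

Lemma sqr_norm2 u : norm2 u ^+ 2 = dot u u.
Proof. by rewrite /norm2 sqr_sqrtr // dot_ge0. Qed.

Lemma norm2_eq0 u : (norm2 u == 0) = (u == 0).
Proof. by rewrite -sqrf_eq0 sqr_norm2 dot_eq0. Qed.

Lemma norm2_0 : norm2 (0 : 'rV[R]_n) = 0.
Proof. by apply/eqP; rewrite norm2_eq0. Qed.

Lemma dot_CauchySchwarz u v : dot u v ^+ 2 <= dot u u * dot v v.
Proof.
apply: quadratic_ge0_discriminant => [|s]; first exact: dot_ge0.
have := dot_ge0 (u + s *: v).
by rewrite !(dotDl, dotDr, dotZl, dotZr) (dotC v u); lra.
Qed.

Lemma dot_le_norm2 u v : dot u v <= norm2 u * norm2 v.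
Proof.
apply: le_of_sqr_le; first by rewrite mulr_ge0 // norm2_ge0.
by rewrite exprMn !sqr_norm2 dot_CauchySchwarz.
Qed.

Lemma norm2Z a u : norm2 (a *: u) = `|a| * norm2 u.
Proof. by rewrite /norm2 dotZl dotZr mulrA -expr2 sqrtrM ?sqr_ge0 // sqrtr_sqr. Qed.

Lemma norm2D_le u v : norm2 (u + v) <= norm2 u + norm2 v.
Proof.
apply: le_of_sqr_le; first by rewrite addr_ge0 // norm2_ge0.
rewrite sqr_norm2 !(dotDl, dotDr) (dotC v u).
by have := dot_le_norm2 u v; rewrite -!sqr_norm2; nra.
Qed.

End EuclideanRows.

Section OperatorNorms.
Variable R : realType.

Lemma dot_mulmx p q (u : 'rV[R]_p) (M : 'M[R]_(p, q)) (v : 'rV[R]_q) :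
  dot (u *m M) v = dot u (v *m M^T).
Proof. by rewrite /dot trmx_mul trmxK mulmxA. Qed.

Lemma dot_delta_mx p (i : 'I_p) (w : 'rV[R]_p) : dot (delta_mx 0 i) w = w 0 i.
Proof.
rewrite dotE (bigD1 i) //= big1 ?addr0; first by rewrite mxE !eqxx mul1r.
by move=> j ji; rewrite mxE (negbTE ji) andbF mul0r.
Qed.

Lemma norm2_normalize p (v : 'rV[R]_p) : norm2 v != 0 ->
  norm2 ((norm2 v)^-1 *: v) = 1.
Proof. by move=> v0; rewrite norm2Z ger0_norm ?invr_ge0 ?norm2_ge0 // mulVf. Qed.

Lemma opnorm_has_ubound p q (M : 'M[R]_(p, q)) :
  has_ubound [set r | exists v : 'rV[R]_p, norm2 v <= 1 /\ r = norm2 (v *m M)].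
Proof.
pose K := \sum_j dot (row j M^T) (row j M^T).
have K0 : 0 <= K by apply: sumr_ge0 => j _; apply: dot_ge0.
have sqr_le v : norm2 (v *m M) ^+ 2 <= K * norm2 v ^+ 2.
  rewrite !sqr_norm2 dotE mulr_suml; apply: ler_sum => j _.
  have -> : (v *m M) 0 j = dot v (row j M^T).
    by rewrite dotE mxE; apply: eq_bigr => i _; rewrite !mxE.
  by rewrite -expr2 mulrC dot_CauchySchwarz.
exists (Num.sqrt K) => r [v [v1 ->]].
apply: le_of_sqr_le; first exact: sqrtr_ge0.
rewrite (sqr_sqrtr K0); apply: (le_trans (sqr_le v)).
by rewrite ler_piMr // expr_le1 // norm2_ge0.
Qed.

Lemma opnorm_ge0 p q (M : 'M[R]_(p, q)) : 0 <= opnorm M.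
Proof.
apply: (ub_le_sup (opnorm_has_ubound M)).
by exists 0; rewrite mul0mx !norm2_0; split; rewrite ?ler01.
Qed.

Lemma norm2_mulmx_le p q (M : 'M[R]_(p, q)) v :
  norm2 (v *m M) <= opnorm M * norm2 v.
Proof.
have [v0|v_neq0] := eqVneq v 0; first by rewrite v0 mul0mx !norm2_0 mulr0.
have nv0 : norm2 v != 0 by rewrite norm2_eq0.
have nv_gt0 : 0 < norm2 v by rewrite lt_def nv0 norm2_ge0.
rewrite -ler_pdivrMr // mulrC -[(norm2 v)^-1]ger0_norm ?invr_ge0 ?norm2_ge0 //.
rewrite -norm2Z scalemxAl; apply: (ub_le_sup (opnorm_has_ubound M)).
by exists ((norm2 v)^-1 *: v); rewrite norm2_normalize.
Qed.

Lemma norm2_mulmx_trmx_le p q (M : 'M[R]_(p, q)) (u : 'rV[R]_q) :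
  norm2 (u *m M^T) <= opnorm M * norm2 u.
Proof.
set w := u *m M^T.
have [w0|w_neq0] := eqVneq (norm2 w) 0.
  by rewrite w0 mulr_ge0 ?opnorm_ge0 ?norm2_ge0.
have w_gt0 : 0 < norm2 w by rewrite lt_def w_neq0 norm2_ge0.
rewrite -(ler_pM2l w_gt0) -expr2 sqr_norm2 -dot_mulmx.
apply: (le_trans (dot_le_norm2 _ _)); rewrite mulrCA mulrA.
by rewrite ler_wpM2r ?norm2_ge0 // norm2_mulmx_le.
Qed.

Lemma sigma_min_norm2_le p q (M : 'M[R]_(p, q)) (u : 'rV[R]_q) :
  sigma_min M * norm2 u <= norm2 (u *m M^T).
Proof.
have [u0|u_neq0] := eqVneq (norm2 u) 0; first by rewrite u0 mulr0 norm2_ge0.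
have u_gt0 : 0 < norm2 u by rewrite lt_def u_neq0 norm2_ge0.
rewrite -ler_pdivlMr // mulrC -[(norm2 u)^-1]ger0_norm ?invr_ge0 ?norm2_ge0 //.
rewrite -norm2Z scalemxAl; apply: ge_inf.
  by exists 0 => r [w [_ ->]]; apply: norm2_ge0.
by exists ((norm2 u)^-1 *: u); rewrite norm2_normalize.
Qed.

Lemma norm2_delta_mx p (i : 'I_p) : norm2 (delta_mx 0 i : 'rV[R]_p) = 1.
Proof. by rewrite /norm2 dot_delta_mx mxE !eqxx sqrtr1. Qed.

Lemma sigma_min_ge0 p q (M : 'M[R]_(p, q.+1)) : 0 <= sigma_min M.
Proof.
apply: lb_le_inf => [|r [w [_ ->]]]; last exact: norm2_ge0.
by exists (norm2 (delta_mx 0 ord0 *m M^T)), (delta_mx 0 ord0); rewrite norm2_delta_mx.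
Qed.

Lemma sigma_min_le_opnorm p q (M : 'M[R]_(p, q.+1)) : sigma_min M <= opnorm M.
Proof.
have := sigma_min_norm2_le M (delta_mx 0 ord0).
have := norm2_mulmx_trmx_le M (delta_mx 0 ord0).
rewrite norm2_delta_mx !mulr1 => le_opnorm le_sigma.
exact: le_trans le_sigma le_opnorm.
Qed.

Lemma sigma_min_gt0_unitmx p q (M : 'M[R]_(p, q)) :
  0 < sigma_min M -> M^T *m M \in unitmx.
Proof.
move=> s_gt0; rewrite unitmxE unitfE; apply/negP => /det0P [v v_neq0 vMM0].
have : sigma_min M * norm2 v <= 0.
  have -> : 0 = norm2 (v *m M^T).
    apply/esym/eqP; rewrite -sqrf_eq0 sqr_norm2 -dot_mulmx -mulmxA vMM0.
    by rewrite dotE big1 // => i _; rewrite mxE mul0r.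
  exact: sigma_min_norm2_le.
rewrite pmulr_rle0 // => nv_le0.
have /eqP : norm2 v = 0 by apply/eqP; rewrite eq_le nv_le0 norm2_ge0.
by rewrite norm2_eq0 (negbTE v_neq0).
Qed.

End OperatorNorms.

Section PsdContraction.
Variables (R : realType) (p : nat) (T : 'M[R]_p).
Hypotheses (T_sym : T^T = T) (T_psd : forall u, 0 <= dot (u *m T) u).

Lemma psd_CauchySchwarz u w :
  dot (u *m T) w ^+ 2 <= dot (u *m T) u * dot (w *m T) w.
Proof.
apply: quadratic_ge0_discriminant => [|s]; first exact: T_psd.
have wTu : dot (w *m T) u = dot (u *m T) w by rewrite dot_mulmx T_sym dotC.
have := T_psd (u + s *: w).
by rewrite mulmxDl -scalemxAl !(dotDl, dotDr, dotZl, dotZr) wTu; lra.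
Qed.

Lemma norm2_mulmx_psd_le k u : 0 <= k ->
  (forall v, dot (v *m T) v <= k * dot v v) -> norm2 (u *m T) <= k * norm2 u.
Proof.
move=> k0 T_le; set w := u *m T.
have sqr_le : dot w w ^+ 2 <= (k ^+ 2 * dot u u) * dot w w.
  apply: (le_trans (psd_CauchySchwarz u w)).
  have := T_le u; have := T_le w; have := T_psd u; have := T_psd w.
  by have := dot_ge0 u; have := dot_ge0 w; nra.
have dw_le : dot w w <= k ^+ 2 * dot u u.
  have [->|w_neq0] := eqVneq (dot w w) 0; first by rewrite mulr_ge0 ?sqr_ge0 ?dot_ge0.
  have w_gt0 : 0 < dot w w by rewrite lt_def w_neq0 dot_ge0.
  by rewrite -(ler_pM2r w_gt0) -expr2.
apply: le_of_sqr_le; first by rewrite mulr_ge0 ?norm2_ge0.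
by rewrite exprMn !sqr_norm2.
Qed.

End PsdContraction.

Section PseudoInverse.
Variable R : realType.

Lemma penrose_unique p q (A : 'M[R]_(p, q)) X1 X2 :
  penrose A X1 -> penrose A X2 -> X1 = X2.
Proof.
case=> a1 b1 c1 d1 [a2 b2 c2 d2].
have f1 : A^T = A^T *m (A *m X2) by rewrite -{1}a2 trmx_mul c2.
have f2 : X1 = X1 *m (X1^T *m A^T) by rewrite -trmx_mul c1 mulmxA b1.
have g1 : A^T = X1 *m A *m A^T by rewrite -{1}a1 -mulmxA trmx_mul d1.
have g2 : X2 = A^T *m (X2^T *m X2) by rewrite mulmxA -trmx_mul d2 b2.
have e1 : X1 = X1 *m A *m X2.
  by rewrite {1}f2 {1}f1 !mulmxA -(mulmxA X1 X1^T) -trmx_mul c1 !mulmxA b1.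
have e2 : X2 = X1 *m A *m X2.
  by rewrite {1}g2 {1}g1 -!mulmxA (mulmxA A^T) -trmx_mul d2 b2 !mulmxA.
by rewrite e1 -e2.
Qed.

Lemma penrose_normal p q (J : 'M[R]_(p, q)) : J^T *m J \in unitmx ->
  penrose J^T (J *m invmx (J^T *m J)).
Proof.
move=> JJ_unit; split.
- by rewrite mulmxA mulmxV // mul1mx.
- by rewrite -!mulmxA (mulmxA J^T) mulmxV // mulmx1.
- by rewrite mulmxA mulmxV // trmx1.
- by rewrite !trmx_mul trmx_inv trmx_mul trmxK -!mulmxA.
Qed.

Lemma mp_pinv_normal p q (J : 'M[R]_(p, q)) : J^T *m J \in unitmx ->
  mp_pinv J^T = J *m invmx (J^T *m J).
Proof.
move=> JJ_unit; apply: (penrose_unique (A := J^T)); last exact: penrose_normal.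
by apply: (xgetPex 0); exists (J *m invmx (J^T *m J)); apply: penrose_normal.
Qed.

Lemma mp_pinv_trmx_mulmx p q (J : 'M[R]_(p, q)) : J^T *m J \in unitmx ->
  mp_pinv J^T *m J^T *m J = J.
Proof. by move=> JJ_unit; rewrite mp_pinv_normal // -!mulmxA mulVmx // mulmx1. Qed.

End PseudoInverse.

Section Differentiability.
Variables (R : realType) (V : normedModType R).

Lemma near0_differentiable (W : normedModType R) (d : V -> W) x :
  (\forall y \near x, d y = 0) -> differentiable d x.
Proof.
move=> d_near0; have dx0 : d x = 0 := nbhs_singleton d_near0.
have d_expansion : d \o shift x = cst (d x) + \0 +o_ 0 id.
  apply/eqaddoP => eps eps_gt0.
  have : \forall y \near (0 : V), d (y + x) = 0.
    rewrite (near_shift 0 x) in d_near0; move: d_near0.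
    by apply: filterS => y /=; rewrite subr0.
  apply: filterS => y /= dy0.
  by rewrite !fctE /= dy0 dx0 addr0 subr0 normr0 mulr_ge0 // ltW.
have d_diff0 : 'd d x = \0 :> (V -> W).
  by apply: diff_unique => //; apply: cst_continuous.
by apply/diff_locallyP; rewrite d_diff0; split => //; apply: cst_continuous.
Qed.

Lemma near_eq_differentiable (W : normedModType R) (f g : V -> W) x :
  (\forall y \near x, f y = g y) -> differentiable f x -> differentiable g x.
Proof.
move=> fg f_diff; rewrite -[g](subrK f); apply: differentiableD => //.
apply: near0_differentiable; near=> y.
by apply/eqP; rewrite !fctE subr_eq0 (near fg y).
Unshelve. all: by end_near.
Qed.

Lemma differentiable_bigsum (W : normedModType R) (I : finType) (P : pred I)
    (F : I -> V -> W) x :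
  (forall i, differentiable (F i) x) ->
  differentiable (fun y => \sum_(i | P i) F i y) x.
Proof.
by move=> F_diff; rewrite -fct_sumE; elim/big_ind : _ => // *; apply: differentiableD.
Qed.

Lemma diff_bigsum (W : normedModType R) (I : finType) (P : pred I)
    (F : I -> V -> W) x :
  (forall i, differentiable (F i) x) -> forall v,
  'd (fun y => \sum_(i | P i) F i y) x v = \sum_(i | P i) 'd (F i) x v.
Proof.
move=> F_diff v; rewrite -fct_sumE.
pose K (a b : V -> W) := differentiable a x /\ 'd a x = b :> (V -> W).
suff [_ ->] : K (\sum_(i | P i) F i) (\sum_(i | P i) ('d (F i) x : V -> W)).
  by rewrite fct_sumE.
apply: (big_ind2 K) => [|a1 b1 a2 b2 [a1_diff a1_d] [a2_diff a2_d]|i _] //.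
- by split; [apply: differentiable_cst | rewrite -/(cst 0) diff_cst].
- by split; [apply: differentiableD | rewrite diffD // a1_d a2_d].
Qed.

Lemma differentiable_bigprod (I : finType) (P : pred I) (F : I -> V -> R) x :
  (forall i, differentiable (F i) x) ->
  differentiable (fun y => \prod_(i | P i) F i y) x.
Proof.
move=> F_diff; rewrite (_ : (fun y => _) = \prod_(i | P i) F i); last first.
  by apply/funext => y; rewrite fct_prodE.
by elim/big_ind : _ => // *; apply: differentiableM.
Qed.

Lemma differentiable_mxP p q (F : V -> 'M[R]_(p, q)) x :
  differentiable F x <-> forall i j, differentiable (fun y => F y i j) x.
Proof.
split=> [F_diff i j|F_diff].
  exact: differentiable_comp (differentiable_coord _ i j).
rewrite (_ : F = fun y => \sum_i \sum_j F y i j *: delta_mx i j); last first.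
  by apply/funext => y; rewrite {1}(matrix_sum_delta (F y)).
apply: differentiable_bigsum => i; apply: differentiable_bigsum => j.
exact: differentiableZl.
Qed.

Lemma differentiable_mx_entry p q (F : V -> 'M[R]_(p, q)) x i j :
  differentiable F x -> differentiable (fun y => F y i j) x.
Proof. by move/differentiable_mxP. Qed.

Lemma diff_mx_entry p q (F : V -> 'M[R]_(p, q)) x i j v :
  differentiable F x -> 'd (fun y => F y i j) x v = ('d F x v) i j.
Proof.
move=> F_diff; have Fij_diff := differentiable_mx_entry i j F_diff.
by rewrite -!deriveE // derive_mx ?mxE //; apply: diff_derivable.
Qed.

Lemma differentiable_mulmx p q r (F : V -> 'M[R]_(p, q)) (G : V -> 'M[R]_(q, r)) x :
  differentiable F x -> differentiable G x ->
  differentiable (fun y => F y *m G y) x.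
Proof.
move=> /differentiable_mxP F_diff /differentiable_mxP G_diff.
apply/differentiable_mxP => i j.
rewrite (_ : (fun y => _) = fun y => \sum_k ((fun z => F z i k) * (fun z => G z k j)) y).
  by apply: differentiable_bigsum => k; apply: differentiableM.
by apply/funext => y; rewrite mxE.
Qed.

Lemma differentiable_trmx p q (F : V -> 'M[R]_(p, q)) x :
  differentiable F x -> differentiable (fun y => (F y)^T) x.
Proof.
move=> /differentiable_mxP F_diff; apply/differentiable_mxP => i j.
by rewrite (_ : (fun y => _) = fun y => F y j i) //; apply/funext => y; rewrite mxE.
Qed.

Lemma differentiable_det p (F : V -> 'M[R]_p) x :
  differentiable F x -> differentiable (fun y => \det (F y)) x.
Proof.
move=> /differentiable_mxP F_diff; apply: differentiable_bigsum => s.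
apply: (differentiableM (differentiable_cst _ x)).
exact: differentiable_bigprod.
Qed.

Lemma differentiable_adj p (F : V -> 'M[R]_p) x :
  differentiable F x -> differentiable (fun y => \adj (F y)) x.
Proof.
move=> /differentiable_mxP F_diff; apply/differentiable_mxP => i j.
rewrite (_ : (fun y => _) =
    fun y => (-1) ^+ (j + i) * \det (row' j (col' i (F y)))); last first.
  by apply/funext => y; rewrite mxE.
apply: (differentiableM (differentiable_cst _ x)); apply: differentiable_det.
apply/differentiable_mxP => k l.
rewrite (_ : (fun y => _) = fun y => F y (lift j k) (lift i l)) //.
by apply/funext => y; rewrite !mxE.
Qed.

Lemma differentiable_scalemx p q (k : V -> R) (F : V -> 'M[R]_(p, q)) x :
  differentiable k x -> differentiable F x -> differentiable (fun y => k y *: F y) x.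
Proof.
move=> k_diff /differentiable_mxP F_diff; apply/differentiable_mxP => i j.
rewrite (_ : (fun y => _) = k * (fun y => F y i j)); first exact: differentiableM.
by apply/funext => y; rewrite mxE.
Qed.

End Differentiability.

Section ProductRule.
Variables (R : realType) (V : normedModType R) (p : nat) (a b : V -> 'rV[R]_p) (x : V).
Hypotheses (a_diff : differentiable a x) (b_diff : differentiable b x).

Let dot_sumE : (fun y => dot (a y) (b y)) =
  (fun y => \sum_i ((fun z => a z 0 i) * (fun z => b z 0 i)) y).
Proof. by apply/funext => y; rewrite dotE. Qed.

Let entry_diff i : differentiable ((fun z => a z 0 i) * (fun z => b z 0 i)) x.
Proof. by apply: differentiableM; apply: differentiable_mx_entry. Qed.

Lemma differentiable_dot : differentiable (fun y => dot (a y) (b y)) x.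
Proof. by rewrite dot_sumE; apply: differentiable_bigsum. Qed.

Lemma diff_dot v : 'd (fun y => dot (a y) (b y)) x v =
  dot ('d a x v) (b x) + dot (a x) ('d b x v).
Proof.
rewrite dot_sumE diff_bigsum // !dotE -big_split /=; apply: eq_bigr => i _.
rewrite diffM; try exact: differentiable_mx_entry.
rewrite [X in X = _]/GRing.add /= (diff_mx_entry 0 i v b_diff).
by rewrite (diff_mx_entry 0 i v a_diff) addrC; congr (_ + _); apply: mulrC.
Qed.

End ProductRule.

Section Gradient.
Variable R : realType.

Lemma diffE_Dmx p q (F : 'rV[R]_p -> 'rV[R]_q) x v : 'd F x v = v *m Dmx F x.
Proof. exact: (esym (mul_rV_lin1 ('d F x) v)). Qed.

Lemma diffE_grad p (F : 'rV[R]_p -> R) x v : 'd F x v = dot v (grad F x).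
Proof.
rewrite {1}(row_sum_delta v) linear_sum dotE; apply: eq_bigr => i _.
by rewrite linearZ mxE.
Qed.

Lemma diff_dot_Dmx p q (a b : 'rV[R]_p -> 'rV[R]_q) x v :
  differentiable a x -> differentiable b x ->
  'd (fun y => dot (a y) (b y)) x v = dot (v *m Dmx a x) (b x) + dot (a x) (v *m Dmx b x).
Proof.
move=> a_diff b_diff; have -> := diff_dot a_diff b_diff v.
by congr (_ + _); congr (dot _ _); apply: diffE_Dmx.
Qed.

Lemma grad_unique p (F : 'rV[R]_p -> R) x (G : 'rV[R]_p) :
  (forall v, 'd F x v = dot v G) -> grad F x = G.
Proof. by move=> dF; apply/rowP => i; rewrite mxE dF dot_delta_mx. Qed.

Variables (n m : nat) (f : 'rV[R]_n -> R) (h L : 'rV[R]_n -> 'rV[R]_m).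
Variables (beta : R) (x : 'rV[R]_n).
Hypotheses (f_diff : differentiable f x) (h_diff : differentiable h x)
  (L_diff : differentiable L x).

Lemma grad_augmented_lagrangian :
  grad (fun y => f y - dot (h y) (L y) + beta * norm2 (h y) ^+ 2) x =
    grad f x - L x *m (Dmx h x)^T - h x *m (Dmx L x)^T
    + (2 * beta) *: (h x *m (Dmx h x)^T).
Proof.
rewrite (_ : (fun y => _) = (f \- (fun y => dot (h y) (L y)))
    + beta *: (fun y => dot (h y) (h y))); last first.
  by apply/funext => y; rewrite sqr_norm2.
have hL_diff := differentiable_dot h_diff L_diff.
have hh_diff := differentiable_dot h_diff h_diff.
apply: grad_unique => v.
have d_hL := diff_dot_Dmx v h_diff L_diff.
have d_hh := diff_dot_Dmx v h_diff h_diff.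
have d_f := diffE_grad f x v.
transitivity (dot v (grad f x)
    - (dot (v *m Dmx h x) (L x) + dot (h x) (v *m Dmx L x))
    + beta * (dot (v *m Dmx h x) (h x) + dot (h x) (v *m Dmx h x))); last first.
  move: (grad f x) (Dmx h x) (Dmx L x) (h x) (L x) => gf J DL hx Lx.
  rewrite !(dotDr, dotNr, dotZr) -!dot_mulmx (dotC hx (v *m DL)) (dotC hx).
  ring.
(* hide the right-hand side from the simplification below *)
set r := (X in _ = X).
rewrite diffD; last 2 first.
- exact: differentiableB.
- exact: differentiableZ.
by rewrite diffB // diffZ // /= d_f d_hL d_hh.
Qed.

End Gradient.

Section SmoothData.
Variable R : realType.

Lemma smooth_differentiable (U V : normedModType R) (F : U -> V) x :
  smooth F -> differentiable F x.
Proof. by move=> F_smooth; apply: (F_smooth 1).1. Qed.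

Lemma smooth_differentiable_diff (U V : normedModType R) (F : U -> V) v x :
  smooth F -> differentiable (fun y => 'd F y v) x.
Proof. by move=> F_smooth; apply: ((F_smooth 2).2 v).1. Qed.

Variables (n m : nat) (f : 'rV[R]_n -> R) (h : 'rV[R]_n -> 'rV[R]_m).
Hypotheses (f_smooth : smooth f) (h_smooth : smooth h).

Lemma differentiable_Dmx x : differentiable (Dmx h) x.
Proof.
apply/differentiable_mxP => i j.
rewrite (_ : (fun z => _) = fun z => ('d h z (delta_mx 0 i)) 0 j); last first.
  by apply/funext => z; rewrite /Dmx mxE.
by apply: differentiable_mx_entry; apply: smooth_differentiable_diff.
Qed.

Lemma differentiable_grad x : differentiable (grad f) x.
Proof.
apply/differentiable_mxP => i j.
rewrite (_ : (fun z => _) = fun z => 'd f z (delta_mx 0 j)); last first.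
  by apply/funext => z; rewrite /grad mxE.
exact: smooth_differentiable_diff.
Qed.

Lemma differentiable_lam x :
  (Dmx h x)^T *m Dmx h x \in unitmx -> differentiable (lam f h) x.
Proof.
pose normal_mx y := (Dmx h y)^T *m Dmx h y.
rewrite unitmxE unitfE -/(normal_mx x) => det_neq0.
(* near x the normal matrix stays invertible, so lam is given by the adjugate formula *)
pose lam_adj y :=
  grad f y *m (Dmx h y *m ((\det (normal_mx y))^-1 *: \adj (normal_mx y))).
have N_diff : differentiable normal_mx x.
  apply: differentiable_mulmx; last exact: differentiable_Dmx.
  exact/differentiable_trmx/differentiable_Dmx.
have detN_diff := differentiable_det N_diff.
apply: (@near_eq_differentiable _ _ _ lam_adj).
  have /cvgr_neq0 := differentiable_continuous detN_diff; move=> /(_ det_neq0).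
  apply: filterS => y detNy_neq0.
  have Ny_unit : normal_mx y \in unitmx by rewrite unitmxE unitfE.
  by rewrite /lam mp_pinv_normal // /invmx Ny_unit.
apply: differentiable_mulmx; first exact: differentiable_grad.
apply: differentiable_mulmx; first exact: differentiable_Dmx.
apply: differentiable_scalemx; last exact: differentiable_adj.
exact: differentiableV.
Qed.

End SmoothData.

Section DescentStep.
Variable R : realType.

Lemma descent_step_linearization n m (J La X : 'M[R]_(n, m)) (gf G : 'rV[R]_n)
    (hx : 'rV[R]_m) beta t :
  X *m J^T *m J = J ->
  G = gf - gf *m X *m J^T - hx *m La^T + (2 * beta) *: (hx *m J^T) ->
  hx + (- t *: G) *m J =
    hx *m (1%:M - (2 * beta * t) *: (J^T *m J)) + t *: (hx *m La^T *m J).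
Proof.
move=> XJJ ->.
have GJ : (gf - gf *m X *m J^T) *m J = 0.
  by rewrite mulmxBl -(mulmxA gf X) -mulmxA XJJ subrr.
rewrite -scalemxAl 2!mulmxDl GJ add0r mulNmx -scalemxAl mulmxBr mulmx1 -scalemxAr.
by rewrite mulmxA scalerDr !scaleNr scalerN opprK scalerA (mulrC t) addrA addrAC.
Qed.

Lemma norm2_id_sub_normal_le n m (J : 'M[R]_(n, m.+1)) (u : 'rV[R]_m.+1) c :
  0 <= c -> c * opnorm J ^+ 2 <= 1 ->
  norm2 (u *m (1%:M - c *: (J^T *m J))) <= (1 - c * sigma_min J ^+ 2) * norm2 u.
Proof.
move=> c0 cL_le1; set s := sigma_min J; set L := opnorm J.
have stepE v : dot (v *m (1%:M - c *: (J^T *m J))) v =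
    dot v v - c * norm2 (v *m J^T) ^+ 2.
  by rewrite mulmxBr mulmx1 -scalemxAr dotDl dotNl dotZl mulmxA dot_mulmx sqr_norm2.
apply: norm2_mulmx_psd_le.
- by rewrite linearB /= trmx1 linearZ /= trmx_mul trmxK.
- move=> v; rewrite stepE subr_ge0.
  have vJ_le : norm2 (v *m J^T) ^+ 2 <= L ^+ 2 * dot v v.
    rewrite -sqr_norm2 -exprMn ler_pXn2r ?nnegrE ?mulr_ge0 ?norm2_ge0 ?opnorm_ge0 //.
    exact: norm2_mulmx_trmx_le.
  apply: (le_trans (ler_wpM2l c0 vJ_le)).
  by rewrite mulrA ler_piMl ?dot_ge0.
- rewrite subr_ge0; apply: le_trans cL_le1; rewrite ler_wpM2l //.
  by rewrite ler_pXn2r ?nnegrE ?opnorm_ge0 ?sigma_min_ge0 ?sigma_min_le_opnorm.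
- move=> v; rewrite stepE.
  have : s ^+ 2 * dot v v <= norm2 (v *m J^T) ^+ 2.
    rewrite -sqr_norm2 -exprMn ler_pXn2r ?nnegrE ?mulr_ge0 ?norm2_ge0 ?sigma_min_ge0 //.
    exact: sigma_min_norm2_le.
  by have := dot_ge0 v; nra.
Qed.

Lemma descent_real_bound (a t g al Ch Rc : R) :
  0 <= a -> a <= Rc -> 0 <= t -> 0 <= g -> 0 < Ch -> 0 < al ->
  (g != 0 -> t <= Num.sqrt (Rc / (2 * Ch)) / g) ->
  (g != 0 -> t <= al * Rc / (2 * Ch * g ^+ 2)) ->
  a - t * al * a + Ch * (t * g) ^+ 2 <= Rc.
Proof.
move=> a0 aR t0 g0 Ch0 al0 t_le1 t_le2.
have tala0 : 0 <= t * al * a by rewrite !mulr_ge0 // ltW.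
have [->|g_neq0] := eqVneq g 0; first by rewrite mulr0 expr0n /= mulr0 addr0; lra.
have g_gt0 : 0 < g by rewrite lt_def g_neq0.
have err_le_half : Ch * (t * g) ^+ 2 <= Rc / 2.
  have q0 : 0 <= Rc / (2 * Ch).
    by apply: divr_ge0; [exact: le_trans a0 aR | exact: mulr_ge0 _ (ltW Ch0)].
  have tg_le : (t * g) ^+ 2 <= Rc / (2 * Ch).
    rewrite -(sqr_sqrtr q0) ler_pXn2r ?nnegrE ?mulr_ge0 ?sqrtr_ge0 //.
    by rewrite -ler_pdivlMr // t_le1.
  by move: tg_le; rewrite ler_pdivlMr ?mulr_gt0 //; nra.
have err_le_decrease : Ch * (t * g) ^+ 2 <= t * al * Rc / 2.
  have : t * (2 * Ch * g ^+ 2) <= al * Rc.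
    by rewrite -ler_pdivlMr ?mulr_gt0 ?exprn_gt0 // t_le2.
  by have := sqr_ge0 g; nra.
have [a_le|a_gt] := lerP a (Rc / 2); first by lra.
have : t * al * Rc / 2 <= t * al * a.
  by rewrite -mulrA; apply: ler_wpM2l; [exact: mulr_ge0 t0 (ltW al0) | exact: ltW].
lra.
Qed.

End DescentStep.

Section DescentStepNorm.
Variables (R : realType) (n m : nat) (J La X : 'M[R]_(n, m.+1)).
Variables (gf G : 'rV[R]_n) (hx hnew : 'rV[R]_m.+1) (beta t Rc Ch : R).

Lemma norm2_descent_step_le :
  X *m J^T *m J = J ->
  G = gf - gf *m X *m J^T - hx *m La^T + (2 * beta) *: (hx *m J^T) ->
  norm2 (hnew - hx - (- t *: G) *m J) <= Ch * norm2 (- t *: G) ^+ 2 ->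
  norm2 hx <= Rc -> 0 < Ch -> 0 <= t -> 0 <= beta ->
  0 < 2 * beta * sigma_min J ^+ 2 - opnorm J * opnorm La ->
  2 * beta * t * opnorm J ^+ 2 <= 1 ->
  (norm2 G != 0 -> t <= Num.sqrt (Rc / (2 * Ch)) / norm2 G) ->
  (norm2 G != 0 -> t <= (2 * beta * sigma_min J ^+ 2 - opnorm J * opnorm La) * Rc
                         / (2 * Ch * norm2 G ^+ 2)) ->
  norm2 hnew <= Rc.
Proof.
move=> XJJ G_eq err_le hxR Ch0 t0 beta0 al0 tL_le1 t_le1 t_le2.
have c0 : 0 <= 2 * beta * t by rewrite !mulr_ge0.
have contract := norm2_id_sub_normal_le hx c0 tL_le1.
have coupling : norm2 (hx *m La^T *m J) <= opnorm J * (opnorm La * norm2 hx).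
  apply: le_trans (norm2_mulmx_le J _) _; rewrite ler_wpM2l ?opnorm_ge0 //.
  exact: norm2_mulmx_trmx_le.
have err_le' : norm2 (hnew - (hx + (- t *: G) *m J)) <= Ch * (t * norm2 G) ^+ 2.
  by rewrite opprD addrA; move: err_le; rewrite norm2Z normrN ger0_norm.
rewrite -[hnew](subrK (hx + (- t *: G) *m J)).
apply: le_trans (norm2D_le _ _) _; rewrite addrC.
apply: le_trans (lerD (lexx _) err_le') _.
rewrite (descent_step_linearization t XJJ G_eq).
apply: le_trans (lerD (norm2D_le _ _) (lexx _)) _.
rewrite norm2Z (ger0_norm t0).
apply: le_trans
  (descent_real_bound (norm2_ge0 hx) hxR t0 (norm2_ge0 G) Ch0 al0 t_le1 t_le2).
apply: lerD => //; have := ler_wpM2l t0 coupling; move: contract; lra.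
Qed.

End DescentStepNorm.

Section StepSize.
Variables (R : realType) (n m : nat) (f : 'rV[R]_n -> R) (h : 'rV[R]_n -> 'rV[R]_m).
Variables (beta Rc Ch : R) (x : 'rV[R]_n).

Lemma lee_edivpos (t a b : R) : b != 0 -> (t%:E <= edivpos a b)%E = (t <= a / b).
Proof. by move=> b_neq0; rewrite /edivpos (negbTE b_neq0) lee_fin. Qed.

Lemma beta1_ge0 : 0 <= beta1 f h x.
Proof.
apply: divr_ge0; first exact: mulr_ge0 (opnorm_ge0 _) (opnorm_ge0 _).
exact: mulr_ge0 (ler0n _ 2) (sqr_ge0 _).
Qed.

Lemma beta1_lt_margin : 0 < sigma_min (Dmx h x) -> beta1 f h x < beta ->
  0 < 2 * beta * sigma_min (Dmx h x) ^+ 2 - opnorm (Dmx h x) * C_lambda f h x.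
Proof.
move=> s_gt0; rewrite /beta1 /sigma1 ltr_pdivrMr ?mulr_gt0 ?exprn_gt0 // => beta_gt.
by rewrite subr_gt0 (mulrC 2) -mulrA.
Qed.

Lemma le_t1 t : 0 < Ch -> 0 < beta -> 0 < opnorm (Dmx h x) ->
  (t%:E <= t1 f h beta Rc Ch x)%E ->
  [/\ 2 * beta * t * opnorm (Dmx h x) ^+ 2 <= 1,
      norm2 (grad (fletcher f h beta) x) != 0 ->
        t <= Num.sqrt (Rc / (2 * Ch)) / norm2 (grad (fletcher f h beta) x) &
      norm2 (grad (fletcher f h beta) x) != 0 ->
        t <= (2 * beta * sigma_min (Dmx h x) ^+ 2 - opnorm (Dmx h x) * C_lambda f h x)
             * Rc / (2 * Ch * norm2 (grad (fletcher f h beta) x) ^+ 2)].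
Proof.
move=> Ch_gt0 beta_gt0 L_gt0; rewrite /t1 !le_min => /andP[/andP[t_le1 t_le2] t_le3].
have bL_gt0 : 0 < 2 * beta * opnorm (Dmx h x) ^+ 2 by rewrite !mulr_gt0 ?exprn_gt0.
split.
- by move: t_le3; rewrite lee_edivpos ?gt_eqF // ler_pdivlMr // mulrC mulrAC.
- by move=> G_neq0; rewrite -lee_edivpos.
- move=> G_neq0; rewrite -lee_edivpos //.
  apply: mulf_neq0; last exact: expf_neq0.
  by apply: mulf_neq0; [rewrite pnatr_eq0 | exact: lt0r_neq0].
Qed.

End StepSize.

Unset Implicit Arguments.

Theorem mainTheorem7 (R : realType) (n m : nat)
  (f : 'rV[R]_n -> R) (h : 'rV[R]_n -> 'rV[R]_m)
  (hf : smooth f) (hh : smooth h)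
  (Rc sig Ch : R)
  (A1 : 0 < Rc /\ 0 < sig /\
        forall x, x \in Cset h Rc -> sigma_min (Dmx h x) >= sig)
  (A3 : 0 < Ch /\
        forall x (v : 'rV[R]_n), x \in Cset h Rc ->
          norm2 (h (x + v) - h x - v *m Dmx h x) <= Ch * norm2 v ^+ 2)
  (beta : R) (hbeta0 : 0 <= beta) (x : 'rV[R]_n) :
  x \in Cset h Rc -> beta > beta1 f h x ->
  forall t : R, 0 <= t -> (t%:E <= t1 f h beta Rc Ch x)%E ->
    x - t *: grad (fletcher f h beta) x \in Cset h Rc.
Proof.
move=> xC beta_gt t t_ge0 t_le.
case: A1 A3 => Rc_gt0 [sig_gt0 sig_le] [Ch_gt0 h_expand].
rewrite in_setE /Cset /=.
destruct m as [|m]; first by rewrite /norm2 dotE big_ord0 sqrtr0 ltW.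
have s_gt0 : 0 < sigma_min (Dmx h x) := lt_le_trans sig_gt0 (sig_le x xC).
have JJ_unit := sigma_min_gt0_unitmx s_gt0.
have beta_gt0 : 0 < beta := le_lt_trans (beta1_ge0 f h x) beta_gt.
have L_gt0 : 0 < opnorm (Dmx h x) := lt_le_trans s_gt0 (sigma_min_le_opnorm _).
have [tL_le t_le1 t_le2] := le_t1 Ch_gt0 beta_gt0 L_gt0 t_le.
have x_rc : norm2 (h x) <= Rc by move: xC; rewrite in_setE.
rewrite -scaleNr; apply: (norm2_descent_step_le (mp_pinv_trmx_mulmx JJ_unit) _
  (h_expand x _ xC) x_rc Ch_gt0 t_ge0 hbeta0 (beta1_lt_margin s_gt0 beta_gt)
  tL_le t_le1 t_le2).
exact: grad_augmented_lagrangian (smooth_differentiable _ hf) (smooth_differentiable _ hh)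
  (differentiable_lam hf hh JJ_unit).
Qed.
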